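(* Let $(G,\rho)$ be a ribbon graph and $v\in V(G)$ with $\rho_v=(e_1,\dots,e_{i+j})$, $i,j\ge1$. Assume that for all $1\le k\le i$ and $i+1\le l\le i+j$, the edges $e_k$ and $e_l$ lie in different $v$-components of $(G,\rho)$. Let $(G',\rho')$ be the union of all $v$-components containing some edge of $\{e_1,\dots,e_i\}$ and $(G'',\rho'')$ the union of all $v$-components containing some edge of $\{e_{i+1},\dots,e_{i+j}\}$, with cyclic orders restricted from $\rho$. Then the genus of $(G,\rho)$ equals the genus of $(G',\rho')$ plus the genus of $(G'',\rho'')$.
   Context: Graphs are finite, connected, loopless, possibly with multiple edges. A ribbon graph $(G,\rho)$ assigns to each vertex $u$ a cyclic order $\rho_u$ on incident edges. For a vertex $v$, a $v$-component is the full ribbon subgraph induced on the vertices of a connected component of $G\setminus v$ together with $v$. Genus: a cycle of a ribbon graph is a closed walk which, whenever it enters a vertex $u$ along an edge $e$, leaves along the edge following $e$ in $\rho_u$; with $\operatorname{cyc}$ the number of cycles, the genus $g$ satisfies $2g=2-|V|+|E|-\operatorname{cyc}$. *)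

(* Ribbon graphs as in the paper: finite vertex/edge types,
   each (loopless) edge has two ends, rho u is a cyclic permutation of the
   edges incident to u (and fixes all other edges). *)
From mathcomp Require Import all_boot all_order all_algebra all_fingroup.
Set Implicit Arguments. Unset Strict Implicit. Unset Printing Implicit Defensive.
Import GRing.Theory Num.Theory.

Record ribbon_graph := RibbonGraph {
  rV : finType;
  rE : finType;
  ends : rE -> rV * rV;
  rho : rV -> {perm rE} }.

Section RG.
Variable G : ribbon_graph.

Definition incident (u : rV G) (e : rE G) : bool :=
  ((ends e).1 == u) || ((ends e).2 == u).

Definition gadj : rel (rV G) :=
  fun x y => [exists e, (ends e == (x, y)) || (ends e == (y, x))].

Definition is_ribbon_graph : Prop :=
  [/\ forall e : rE G, (ends e).1 != (ends e).2,
      forall x y : rV G, connect gadj x y,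
      forall (u : rV G) (e : rE G), ~~ incident u e -> rho u e = e
    & forall (u : rV G) (e1 e2 : rE G), incident u e1 -> incident u e2 ->
        exists k, iter k (rho u) e1 = e2].

(* darts: (e, false) traverses e from (ends e).1 to (ends e).2,
          (e, true)  traverses e from (ends e).2 to (ends e).1 *)
Definition dhead (d : rE G * bool) : rV G :=
  if d.2 then (ends d.1).1 else (ends d.1).2.

(* the cyclic order rho u restricted to the edge set Es:
   the first edge of Es following e in rho u *)
Definition next_in (Es : {set rE G}) (u : rV G) (e : rE G) : rE G :=
  let s := [seq iter k.+1 (rho u) e | k <- iota 0 #|rE G|] in
  nth e s (find (fun x => x \in Es) s).

(* one step of a cycle (face) walk in the sub-ribbon graph with edges Es:
   entering u along e, leave along the edge following e in the restricted order *)
Definition face_step (Es : {set rE G}) (d : rE G * bool) : rE G * bool :=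
  let u := dhead d in
  let e' := next_in Es u d.1 in
  (e', (ends e').2 == u).

Definition darts_of (Es : {set rE G}) : {set rE G * bool} :=
  [set d | d.1 \in Es].

(* number of cycles: orbits of the face walk on darts; convention: an
   edgeless (single-vertex) graph has one (trivial) cycle *)
Definition ncycles (Es : {set rE G}) : nat :=
  if Es == set0 then 1%N else
  #|[set [set y | fconnect (face_step Es) x y] | x in darts_of Es]|.

Definition genus_sub (Vs : {set rV G}) (Es : {set rE G}) : rat :=
  (2 - #|Vs|%:R + #|Es|%:R - (ncycles Es)%:R) / 2.

Definition genus : rat := genus_sub [set: rV G] [set: rE G].

Definition adj_minus (v : rV G) : rel (rV G) :=
  fun x y => [&& x != v, y != v & gadj x y].

Definition vcompV (v w : rV G) : {set rV G} :=
  v |: [set x | (x != v) && connect (adj_minus v) w x].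

Definition vcomps (v : rV G) : {set {set rV G}} :=
  [set vcompV v w | w in [set w | w != v]].

Definition induced_E (W : {set rV G}) : {set rE G} :=
  [set e | ((ends e).1 \in W) && ((ends e).2 \in W)].

Definition union_V (v : rV G) (es : seq (rE G)) : {set rV G} :=
  \bigcup_(C in vcomps v | has (fun e => e \in induced_E C) es) C.
Definition union_E (v : rV G) (es : seq (rE G)) : {set rE G} :=
  \bigcup_(C in vcomps v | has (fun e => e \in induced_E C) es) induced_E C.

End RG.

From mathcomp Require Import all_boot all_order all_algebra all_fingroup.
From mathcomp Require Import zify lra.
Set Implicit Arguments. Unset Strict Implicit. Unset Printing Implicit Defensive.
Import GRing.Theory.

(* Away from v, all edges at a vertex lie in one v-component, so there the face
   walks of G, G' and G'' agree.  At v, G passes from e_i to e_(i+1) and from e_(i+j)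
   to e_1, while G' wraps e_i to e_1 and G'' wraps e_(i+j) to e_(i+1).  Hence the face
   permutation of G is that of the disjoint union of G' and G'' composed with the
   transposition of the two darts entering v along e_i and e_(i+j).  These darts lie
   in different faces of the union, so the transposition merges two faces into one:
   cyc = cyc' + cyc'' - 1.  Together with |V| = |V'| + |V''| - 1 and
   |E| = |E'| + |E''|, Euler's formula gives g = g' + g''. *)

Section OrbitsOn.
Variable T : finType.
Implicit Types (f g : T -> T) (A : {set T}) (s : {perm T}).

Definition orbits_on f A : {set {set T}} := [set [set y | fconnect f x y] | x in A].

Lemma fconnect_iterP f x y : reflect (exists n, iter n f x = y) (fconnect f x y).
Proof.
apply: (iffP idP) => [fxy | [n <-]]; last exact: fconnect_iter.
by exists (findex f x y); apply: iter_findex.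
Qed.

Lemma iter_in f A n x :
  {in A, forall y, f y \in A} -> x \in A -> iter n f x \in A.
Proof. by move=> fA xA; elim: n => //= n; apply: fA. Qed.

Lemma eq_iter_in f g A n :
  {in A, f =1 g} -> {in A, forall y, f y \in A} ->
  {in A, forall x, iter n f x = iter n g x}.
Proof.
move=> fg fA x xA; elim: n => //= n <-.
by rewrite fg // iter_in.
Qed.

Lemma eq_orbits_on f g A :
  {in A, f =1 g} -> {in A, forall y, f y \in A} -> orbits_on f A = orbits_on g A.
Proof.
move=> fg fA; apply: eq_in_imset => x xA; apply/setP => y; rewrite !inE.
by apply/fconnect_iterP/fconnect_iterP => -[n <-]; exists n; rewrite (eq_iter_in _ fg).
Qed.

Lemma orbits_on_setT s : orbits_on s [set: T] = porbits s.
Proof.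
have orbitE x : [set y | fconnect s x y] = porbit s x.
  apply/setP => y; rewrite inE.
  apply/fconnect_iterP/porbitP => -[n yE]; exists n.
  - by rewrite permX yE.
  - by rewrite yE permX.
by apply/setP => X; apply/imsetP/imsetP => -[x _ ->]; exists x; rewrite ?orbitE.
Qed.

Lemma card_porbits_split s A B : B = ~: A ->
  {in A, forall x, s x \in A} -> {in B, forall x, s x \in B} ->
  #|porbits s| = (#|orbits_on s A| + #|orbits_on s B|)%N.
Proof.
move=> -> sA sAC; rewrite -orbits_on_setT -(setUCr A) /orbits_on imsetU cardsU.
suff -> : orbits_on s A :&: orbits_on s (~: A) = set0 by rewrite cards0 subn0.
apply/setP => X; rewrite !inE.
apply/negP => /andP[/imsetP[a aA ->] /imsetP[b bAC /setP/(_ b)]].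
rewrite !inE connect0 => /fconnect_iterP[n ab].
by move: bAC; rewrite inE -ab iter_in.
Qed.

End OrbitsOn.

Section Faces.
Variable G : ribbon_graph.
Implicit Types (u : rV G) (e : rE G) (d : rE G * bool) (Es : {set rE G}).

Definition dart_into u e : rE G * bool := (e, (ends e).1 == u).
Definition dart_from u e : rE G * bool := (e, (ends e).2 == u).

Lemma face_stepE Es d :
  face_step Es d = dart_from (dhead d) (next_in Es (dhead d) d.1).
Proof. by []. Qed.

Lemma incident_dhead d : incident (dhead d) d.1.
Proof. by rewrite /dhead /incident; case: d.2; rewrite eqxx ?orbT. Qed.

Lemma dhead_dart_into u e : incident u e -> dhead (dart_into u e) = u.
Proof. by rewrite /incident /dart_into /dhead /=; case: eqP => //= _ /eqP. Qed.

Lemma next_in_first Es u e m :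
  (m < #|rE G|)%N -> iter m.+1 (rho u) e \in Es ->
  (forall m', (m' < m)%N -> iter m'.+1 (rho u) e \notin Es) ->
  next_in Es u e = iter m.+1 (rho u) e.
Proof.
move=> m_lt inEs before; rewrite /next_in; set s := map _ _.
have nth_s k : (k < #|rE G|)%N -> nth e s k = iter k.+1 (rho u) e.
  by move=> k_lt; rewrite (nth_map 0) ?size_iota ?nth_iota.
suff -> : find (fun x => x \in Es) s = m by rewrite nth_s.
have has_s : has (fun x => x \in Es) s.
  apply/hasP; exists (nth e s m); last by rewrite nth_s.
  by rewrite mem_nth // size_map size_iota.
case: (ltngtP (find (fun x => x \in Es) s) m) => // lt.
- by have := nth_find e has_s; rewrite nth_s ?(ltn_trans lt) // (negbTE (before _ lt)).
- by have := before_find e lt; rewrite nth_s // inEs.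
Qed.

Lemma next_in_rho Es u e : rho u e \in Es -> next_in Es u e = rho u e.
Proof.
move=> inEs; apply: (@next_in_first _ _ _ 0) => //.
by apply/card_gt0P; exists e.
Qed.

Lemma next_in_mem Es u e : e \in Es -> next_in Es u e \in Es.
Proof.
move=> eEs; rewrite /next_in; set s := map _ _; apply: (nth_find e).
have ord_gt0 : (0 < #|porbit (rho u) e|)%N by rewrite lt0n card_porbit_neq0.
have ord_le : (#|porbit (rho u) e| <= #|rE G|)%N by apply: max_card.
apply/hasP; exists (nth e s #|porbit (rho u) e|.-1).
  by rewrite mem_nth // size_map size_iota prednK.
by rewrite (nth_map 0) ?size_iota ?nth_iota ?prednK ?iter_porbit.
Qed.

Lemma face_step_darts Es :
  {in darts_of Es, forall d, face_step Es d \in darts_of Es}.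
Proof. by move=> d; rewrite !inE; apply: next_in_mem. Qed.

Lemma face_step_rho Es d :
  rho (dhead d) d.1 \in Es -> face_step Es d = face_step [set: rE G] d.
Proof. by move=> inEs; rewrite !face_stepE !next_in_rho ?inE. Qed.

Lemma ncycles_orbits_on Es (s : {perm rE G * bool}) :
  Es != set0 -> {in darts_of Es, s =1 face_step Es} ->
  ncycles Es = #|orbits_on s (darts_of Es)|.
Proof.
move=> Es_n0 sE; rewrite /ncycles (negbTE Es_n0).
rewrite -(@eq_orbits_on _ (face_step Es)) //; last exact: face_step_darts.
by move=> d /sE.
Qed.

Hypothesis HG : is_ribbon_graph G.

Lemma loopless e : (ends e).1 != (ends e).2.
Proof. by case: HG. Qed.

Lemma incident_rho u e : incident u e -> incident u (rho u e).
Proof.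
move=> ue; apply: contraT => /[dup] /(let: And4 _ _ fix_rho _ := HG in fix_rho u).
by move/perm_inj=> ->; rewrite ue.
Qed.

Lemma dart_intoK d : dart_into (dhead d) d.1 = d.
Proof.
case: d => e [] /=; rewrite /dart_into /dhead /= ?eqxx //.
by rewrite (negbTE (loopless e)).
Qed.

Lemma dart_from_inj e u1 u2 :
  incident u1 e -> incident u2 e -> dart_from u1 e = dart_from u2 e -> u1 = u2.
Proof.
rewrite /incident /dart_from; have := loopless e; case: (ends e) => a b /= ab.
by case/orP=> /eqP <-; case/orP=> /eqP <- //; case; rewrite eqxx eq_sym (negbTE ab).
Qed.

Lemma face_step_setT_inj : injective (face_step [set: rE G]).
Proof.
move=> d1 d2; rewrite !face_stepE !next_in_rho ?inE // => eq12.
have eq_rho : rho (dhead d1) d1.1 = rho (dhead d2) d2.1 by case: eq12.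
have eq_u : dhead d1 = dhead d2.
  apply: (dart_from_inj (incident_rho (incident_dhead d1))).
    by rewrite eq_rho incident_rho ?incident_dhead.
  by rewrite [in RHS]eq_rho.
move: eq_rho; rewrite eq_u => /perm_inj eq_e.
by rewrite -(dart_intoK d1) -(dart_intoK d2) eq_u eq_e.
Qed.

Definition face_perm : {perm rE G * bool} := perm face_step_setT_inj.

Lemma ncycles_setT e : ncycles [set: rE G] = #|porbits face_perm|.
Proof.
rewrite (@ncycles_orbits_on _ face_perm); last by move=> d _; rewrite permE.
  by rewrite -orbits_on_setT; congr #|orbits_on _ _|; apply/setP => d; rewrite !inE.
by apply/set0Pn; exists e.
Qed.

End Faces.

Section VComponents.
Variable G : ribbon_graph.
Hypothesis HG : is_ribbon_graph G.
Variable v : rV G.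
Implicit Types (u x w : rV G) (e : rE G) (s : seq (rE G)).

Local Notation linked := (connect (adj_minus v)).

Definition end_off e : rV G := if (ends e).1 != v then (ends e).1 else (ends e).2.

Definition reached s x : bool := has (fun e => linked (end_off e) x) s.

Definition vseparated (s1 s2 : seq (rE G)) : Prop :=
  forall e1 e2, e1 \in s1 -> e2 \in s2 ->
    forall C, C \in vcomps v -> ~~ ((e1 \in induced_E C) && (e2 \in induced_E C)).

Lemma gadj_ends e : gadj (ends e).1 (ends e).2.
Proof. by apply/existsP; exists e; rewrite -surjective_pairing eqxx. Qed.

Lemma linked_sym : connect_sym (adj_minus v).
Proof.
apply: sym_connect_sym => x y; rewrite /adj_minus andbCA; congr [&& _, _ & _].
by apply/existsP/existsP => -[e exy]; exists e; rewrite orbC.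
Qed.

Lemma end_off_neq e : end_off e != v.
Proof.
rewrite /end_off; case: ifPn => // /negPn/eqP e1v.
by rewrite -e1v eq_sym (loopless HG).
Qed.

Lemma linked_end_off u e : u != v -> incident u e -> linked u (end_off e).
Proof.
rewrite /incident /end_off => uv /orP[] /eqP eu; rewrite -{u}eu in uv *.
  by rewrite uv.
case: ifPn => e1v //; apply: connect1.
rewrite /adj_minus uv e1v /=; apply/existsP; exists e.
by rewrite -surjective_pairing eqxx orbT.
Qed.

Lemma mem_induced_vcompV w e :
  w != v -> (e \in induced_E (vcompV v w)) = linked w (end_off e).
Proof.
move=> wv; rewrite /induced_E /vcompV !inE /end_off.
case: (eqVneq (ends e).1 v) => [e1v | e1v] /=.
  by rewrite -e1v eq_sym (negbTE (loopless HG e)).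
case: (eqVneq (ends e).2 v) => [e2v | e2v] /=; first by rewrite andbT.
apply/andP/idP => [[] // | w_e1]; split => //.
apply: (connect_trans w_e1); apply: connect1.
by rewrite /adj_minus e1v e2v gadj_ends.
Qed.

Lemma vcompV_end_off e : vcompV v (end_off e) \in vcomps v.
Proof. by apply/imsetP; exists (end_off e); rewrite ?inE ?end_off_neq. Qed.

Lemma union_EE s : union_E v s = [set e | reached s (end_off e)].
Proof.
apply/setP => e; rewrite inE /reached; apply/bigcupP/hasP.
- move=> [_ /andP[/imsetP[w + ->] /hasP[e0 e0s]]]; rewrite inE => wv.
  rewrite !mem_induced_vcompV // => w_e0 w_e; exists e0 => //.
  by apply: connect_trans w_e; rewrite linked_sym.
- move=> [e0 e0s e0_e]; exists (vcompV v (end_off e0)).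
    rewrite vcompV_end_off; apply/hasP; exists e0 => //.
    by rewrite mem_induced_vcompV ?end_off_neq.
  by rewrite mem_induced_vcompV ?end_off_neq.
Qed.

Lemma mem_union_E s e : e \in s -> e \in union_E v s.
Proof. by move=> es; rewrite union_EE inE /reached; apply/hasP; exists e. Qed.

Lemma union_VE s :
  s != [::] -> union_V v s = v |: [set x | (x != v) && reached s x].
Proof.
case: s => [// | e1 s] _; apply/setP => x; rewrite !inE /reached.
apply/bigcupP/idP.
- move=> [_ /andP[/imsetP[w + ->] /hasP[e0 e0s]]]; rewrite inE => wv.
  rewrite mem_induced_vcompV // /vcompV !inE => w_e0 /orP[-> // | /andP[xv w_x]].
  apply/orP; right; rewrite xv andTb; apply/hasP; exists e0 => //.
  by apply: connect_trans w_x; rewrite linked_sym.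
- have comp_of e0 : e0 \in e1 :: s ->
      (vcompV v (end_off e0) \in vcomps v) &&
      has (fun e => e \in induced_E (vcompV v (end_off e0))) (e1 :: s).
    move=> e0s; rewrite vcompV_end_off andTb; apply/hasP; exists e0 => //.
    by rewrite mem_induced_vcompV ?end_off_neq.
  move=> /orP[/eqP -> | /andP[xv /hasP[e0 e0s e0_x]]].
    exists (vcompV v (end_off e1)); first by rewrite comp_of ?mem_head.
    by rewrite /vcompV !inE eqxx.
  exists (vcompV v (end_off e0)); first exact: comp_of.
  by rewrite /vcompV !inE xv e0_x orbT.
Qed.

Lemma union_E_rho s u e : u != v -> incident u e ->
  (rho u e \in union_E v s) = (e \in union_E v s).
Proof.
move=> uv ue; rewrite union_EE !inE /reached.
have link_e : linked (end_off e) (end_off (rho u e)).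
  apply: (@connect_trans _ _ u); first by rewrite linked_sym linked_end_off.
  by rewrite linked_end_off // incident_rho.
apply: eq_has => e0; apply/idP/idP => [/connect_trans | /connect_trans]; apply => //.
by rewrite linked_sym.
Qed.

Lemma linked_incident_v x : x != v -> exists2 e, incident v e & linked x (end_off e).
Proof.
move=> xv; have /connectP[p] := (let: And4 _ conn _ _ := HG in conn) x v.
elim: p x xv => [| z p IHp] x xv /=; first by move=> _ vx; rewrite vx eqxx in xv.
move=> /andP[/existsP[e exz] zp] vz; case: (eqVneq z v) => [zv | zv].
  exists e; rewrite /incident /end_off; case/orP: exz => /eqP ->;
    by rewrite /= ?zv ?eqxx ?xv ?orbT /= ?connect0.
have [e' ve' z_e'] := IHp z zv zp vz; exists e' => //.
apply: connect_trans z_e'; apply: connect1.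
by rewrite /adj_minus xv zv; apply/existsP; exists e.
Qed.

Lemma reached_incident_v s x :
  (forall e, incident v e -> e \in s) -> x != v -> reached s x.
Proof.
move=> inc_s xv; have [e ve x_e] := linked_incident_v xv.
by apply/hasP; exists e; rewrite ?inc_s // linked_sym.
Qed.

Section Separated.
Variables s1 s2 : seq (rE G).
Hypothesis incident_v_cat : forall e, incident v e -> e \in s1 ++ s2.
Hypothesis sep12 : vseparated s1 s2.

Lemma reached_compl x : x != v -> reached s2 x = ~~ reached s1 x.
Proof.
move=> xv; have := reached_incident_v incident_v_cat xv.
rewrite /reached has_cat -/(reached s1 x) -/(reached s2 x).
case r1: (reached s1 x); case r2: (reached s2 x) => // _.
move: r1 r2 => /hasP[e1 e1s e1_x] /hasP[e2 e2s e2_x].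
have := sep12 e1s e2s (vcompV_end_off e1).
rewrite !mem_induced_vcompV ?end_off_neq // connect0 /=.
by rewrite (connect_trans e1_x) // linked_sym.
Qed.

Lemma union_E_compl : union_E v s2 = ~: union_E v s1.
Proof. by apply/setP => e; rewrite !union_EE !inE reached_compl ?end_off_neq. Qed.

Lemma card_union_V : s1 != [::] -> s2 != [::] ->
  (#|union_V v s1| + #|union_V v s2| = #|rV G| + 1)%N.
Proof.
move=> s1_n0 s2_n0; rewrite !union_VE // !cardsU1 !inE !eqxx /=.
have := cardsID [set x | reached s1 x] [set~ v].
set S1 := _ :&: _; set S2 := _ :\: _.
have -> : S1 = [set x | (x != v) && reached s1 x] by apply/setP => x; rewrite !inE.
have -> : S2 = [set x | (x != v) && reached s2 x].
  apply/setP => x; rewrite !inE; case: (eqVneq x v) => [-> | xv].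
    by rewrite !andbF.
  by rewrite !andbT reached_compl.
have V_gt0 : (0 < #|rV G|)%N by apply/card_gt0P; exists v.
rewrite cardsC1 => /(congr1 succn); rewrite prednK // => <-.
by rewrite [RHS]addn1 addnACA.
Qed.

End Separated.

End VComponents.

Section SplitAtV.
Variable G : ribbon_graph.
Hypothesis HG : is_ribbon_graph G.
Variables (v : rV G) (i j : nat) (es : seq (rE G)) (e0 : rE G).
Hypotheses (i_gt0 : (0 < i)%N) (j_gt0 : (0 < j)%N) (size_es : size es = (i + j)%N)
  (uniq_es : uniq es) (incident_vE : forall e, incident v e = (e \in es))
  (rho_vE : forall (k : nat) (d : rE G), (k < i + j)%N ->
     rho v (nth d es k) = nth d es (k.+1 %% (i + j)))
  (sep_es : vseparated v (take i es) (drop i es)).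

Local Notation n := (i + j)%N.
Local Notation ek k := (nth e0 es k).
Local Notation E1 := (union_E v (take i es)).
Local Notation E2 := (union_E v (drop i es)).

Let n_gt0 : (0 < n)%N := ltn_addr j i_gt0.

Lemma E2_compl : E2 = ~: E1.
Proof. by apply: union_E_compl => // e; rewrite cat_take_drop incident_vE. Qed.

Lemma ek_incident k : (k < n)%N -> incident v (ek k).
Proof. by move=> k_lt; rewrite incident_vE mem_nth ?size_es. Qed.

Lemma ek_E1 k : (k < n)%N -> (ek k \in E1) = (k < i)%N.
Proof.
move=> k_lt; case: (ltnP k i) => [k_lt_i | i_le_k].
  apply: (mem_union_E HG); rewrite -(nth_take e0 k_lt_i) mem_nth //.
  by rewrite size_takel // size_es leq_addr.
have : ek k \in E2.
  apply: (mem_union_E HG); rewrite -(subnKC i_le_k) -nth_drop mem_nth //.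
  by rewrite size_drop size_es; lia.
by rewrite E2_compl inE => /negbTE.
Qed.

Lemma iter_rho_ek k m : (k < n)%N -> iter m (rho v) (ek k) = ek ((k + m) %% n).
Proof.
move=> k_lt; elim: m => [| m IHm]; first by rewrite addn0 modn_small.
by rewrite iterS IHm rho_vE ?ltn_pmod // -[in LHS]addn1 modnDml addn1 addnS.
Qed.

Lemma next_in_ek (Es : {set rE G}) k m : (k < n)%N -> (m < n)%N ->
  ek ((k + m.+1) %% n) \in Es ->
  (forall m', (m' < m)%N -> ek ((k + m'.+1) %% n) \notin Es) ->
  next_in Es v (ek k) = ek ((k + m.+1) %% n).
Proof.
move=> k_lt m_lt inEs before; rewrite -iter_rho_ek //.
have n_le : (n <= #|rE G|)%N by rewrite -size_es -(card_uniqP uniq_es) max_card.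
apply: next_in_first; first exact: leq_trans m_lt n_le.
- by rewrite iter_rho_ek.
- by move=> m' lt_m'; rewrite iter_rho_ek // before.
Qed.

Lemma next_in_E1_last : next_in E1 v (ek i.-1) = ek 0.
Proof.
have wrap : (i.-1 + j.+1) %% n = 0 by rewrite -addSnnS prednK // modnn.
have -> : ek 0 = ek ((i.-1 + j.+1) %% n) by rewrite wrap.
apply: next_in_ek; [lia | lia | by rewrite wrap ek_E1 |].
by move=> m lt_m; rewrite modn_small ?ek_E1 -?leqNgt; lia.
Qed.

Lemma next_in_E2_last : next_in E2 v (ek n.-1) = ek i.
Proof.
have wrap : (n.-1 + i.+1) %% n = i.
  by rewrite -addSnnS prednK // addnC modnDr modn_small // -addn1 leq_add2l.
have -> : ek i = ek ((n.-1 + i.+1) %% n) by rewrite wrap.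
apply: next_in_ek; [lia | lia | by rewrite wrap E2_compl inE ek_E1 ?ltnn; lia |].
move=> m lt_m; rewrite -addSnnS prednK // addnC modnDr modn_small; last lia.
by rewrite E2_compl inE negbK ek_E1 //; lia.
Qed.

(* In the 1-based numbering of the paper: the darts entering v along e_i and e_(i+j). *)
Definition dart_last1 := dart_into v (ek i.-1).
Definition dart_last2 := dart_into v (ek n.-1).

Lemma rho_dhead_E1 z : z != dart_last1 -> z != dart_last2 ->
  (rho (dhead z) z.1 \in E1) = (z.1 \in E1).
Proof.
move=> z_1 z_2; case: (eqVneq (dhead z) v) => [zv | zv].
  have := incident_dhead z; rewrite zv incident_vE => /(nthP e0)[k].
  rewrite size_es => k_lt zk.
  have zE : z = dart_into v (ek k) by rewrite zk -zv dart_intoK.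
  have k_1 : k <> i.-1 by move=> ki; move: z_1; rewrite zE ki eqxx.
  have k_2 : k <> n.-1 by move=> kn; move: z_2; rewrite zE kn eqxx.
  by rewrite -zk rho_vE // modn_small ?ek_E1 //; lia.
exact: union_E_rho (incident_dhead z).
Qed.

Definition split_face d := face_step (if d.1 \in E1 then E1 else E2) d.

Lemma split_faceE z :
  split_face z = face_step [set: rE G] (tperm dart_last1 dart_last2 z).
Proof.
have lt_i1 : (i.-1 < n)%N by lia.
have lt_n1 : (n.-1 < n)%N by lia.
rewrite /split_face; case: tpermP => [-> | -> | z_1 z_2].
- have -> : ek i.-1 \in E1 by rewrite ek_E1 //; lia.
  rewrite !face_stepE /=.
  rewrite !dhead_dart_into ?ek_incident // next_in_E1_last next_in_rho ?inE //.
  by rewrite rho_vE // prednK // modnn.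
- have -> : (ek n.-1 \in E1) = false by rewrite ek_E1 //; lia.
  rewrite !face_stepE /=.
  rewrite !dhead_dart_into ?ek_incident // next_in_E2_last next_in_rho ?inE //.
  by rewrite rho_vE // prednK // modn_small //; lia.
- have := rho_dhead_E1 (introN eqP z_1) (introN eqP z_2); case: ifP => _ rho_E1.
    by rewrite face_step_rho ?rho_E1.
  by rewrite face_step_rho // E2_compl inE rho_E1.
Qed.

Definition split_perm := (tperm dart_last1 dart_last2 * face_perm HG)%g.

Lemma split_permE : split_perm =1 split_face.
Proof. by move=> z; rewrite permM permE split_faceE. Qed.

Lemma darts_E2 : darts_of E2 = ~: darts_of E1.
Proof. by apply/setP => d; rewrite !inE E2_compl inE. Qed.

Lemma split_perm_on (Es : {set rE G}) : Es \in [set E1; E2] ->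
  {in darts_of Es, split_perm =1 face_step Es}.
Proof.
move=> Es12 d; rewrite inE split_permE /split_face.
case/set2P: Es12 => -> dEs; first by rewrite dEs.
by move: (dEs); rewrite E2_compl inE => /negbTE ->.
Qed.

Lemma split_perm_closed (Es : {set rE G}) : Es \in [set E1; E2] ->
  {in darts_of Es, forall d, split_perm d \in darts_of Es}.
Proof. by move=> Es12 d dEs; rewrite (split_perm_on Es12) // face_step_darts. Qed.

Lemma ncycles_split_perm (Es : {set rE G}) : Es \in [set E1; E2] ->
  ncycles Es = #|orbits_on split_perm (darts_of Es)|.
Proof.
move=> Es12; apply: ncycles_orbits_on; last exact: split_perm_on.
apply/set0Pn; case/set2P: Es12 => ->; [exists (ek 0) | exists (ek n.-1)];
  by rewrite ?E2_compl ?inE ek_E1 //; lia.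
Qed.

Lemma dart_last1_notin_orbit : dart_last1 \notin porbit split_perm dart_last2.
Proof.
have last2_E2 : dart_last2 \in darts_of E2 by rewrite inE /= E2_compl inE ek_E1 //; lia.
apply/porbitP => -[k]; rewrite permX => last1E.
have := iter_in k (split_perm_closed (set22 E1 E2)) last2_E2.
by rewrite -last1E inE /= E2_compl inE ek_E1 //; lia.
Qed.

Lemma dart_last1_neq2 : dart_last1 != dart_last2.
Proof.
by apply/eqP => /(congr1 fst) /= /eqP; rewrite nth_uniq ?size_es //; lia.
Qed.

Lemma ncycles_split : (ncycles [set: rE G] + 1 = ncycles E1 + ncycles E2)%N.
Proof.
have fpE : face_perm HG = (tperm dart_last1 dart_last2 * split_perm)%g.
  by rewrite mulgA tperm2 mul1g.
have := porbits_mul_tperm split_perm dart_last1 dart_last2.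
rewrite /= -fpE dart_last1_notin_orbit dart_last1_neq2 -(ncycles_setT HG e0).
rewrite (card_porbits_split darts_E2 (split_perm_closed (set21 E1 E2))
                                     (split_perm_closed (set22 E1 E2))).
by rewrite -!ncycles_split_perm ?set21 ?set22; lia.
Qed.

End SplitAtV.

Lemma genus_glue (G : ribbon_graph) (V1 V2 : {set rV G}) (E1 E2 : {set rE G}) :
  (#|V1| + #|V2| = #|rV G| + 1)%N -> (#|E1| + #|E2| = #|rE G|)%N ->
  (ncycles [set: rE G] + 1 = ncycles E1 + ncycles E2)%N ->
  (genus G = genus_sub V1 E1 + genus_sub V2 E2)%R.
Proof.
rewrite /genus /genus_sub !cardsT.
pose cast m := (m%:R : rat)%R.
move=> /(congr1 cast) V12 /(congr1 cast) E12 /(congr1 cast) C12.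
rewrite /cast !natrD in V12 E12 C12; lra.
Qed.

Unset Implicit Arguments. Set Strict Implicit.

Theorem lemma4p6 (G : ribbon_graph) (v : rV G) (i j : nat) (es : seq (rE G)) :
  is_ribbon_graph G ->
  (0 < i)%N -> (0 < j)%N ->
  (* rho_v = (e_1, ..., e_(i+j)) *)
  size es = (i + j)%N -> uniq es ->
  (forall e, incident v e = (e \in es)) ->
  (forall (k : nat) (d : rE G), (k < i + j)%N ->
     rho v (nth d es k) = nth d es (k.+1 %% (i + j))) ->
  (* e_k (k <= i) and e_l (l > i) lie in different v-components *)
  (forall e1 e2, e1 \in take i es -> e2 \in drop i es ->
     forall C, C \in vcomps v ->
       ~~ ((e1 \in induced_E C) && (e2 \in induced_E C))) ->
  (genus G = genus_sub (union_V v (take i es)) (union_E v (take i es))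
          + genus_sub (union_V v (drop i es)) (union_E v (drop i es)))%R.
Proof.
move=> HG i_gt0 j_gt0 size_es uniq_es incident_vE rho_vE sep_es.
have [e0 _] : exists e0, e0 \in es.
  case: es size_es {uniq_es incident_vE rho_vE sep_es} => [| e ?] /=; first lia.
  by exists e; rewrite mem_head.
have incident_cat e : incident v e -> e \in take i es ++ drop i es.
  by rewrite cat_take_drop incident_vE.
have take_n0 : take i es != [::] by rewrite -size_eq0 size_takel ?size_es; lia.
have drop_n0 : drop i es != [::] by rewrite -size_eq0 size_drop size_es; lia.
apply: genus_glue.
- exact: card_union_V.
- by rewrite (union_E_compl HG incident_cat sep_es) cardsC.
- exact: (ncycles_split HG e0 i_gt0 j_gt0 size_es uniq_es incident_vE rho_vE sep_es).
Qed.
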